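(* Skeptic can weakly force each of the events \[ E_5:=\{\xi:\ s_n>\sqrt n-1\ \text{for infinitely many } n\},\qquad E_6:=\{\xi:\ s_n<-\sqrt n+1\ \text{for infinitely many } n\}. \]
   Context: Fair-coin game: in rounds $n=1,2,\dots$ Skeptic announces $M_n\in\mathbb{R}$ (depending only on $x_1,\dots,x_{n-1}$), then Reality announces $x_n\in\{-1,1\}$. A path is an infinite sequence $\xi=x_1x_2\cdots\in\{-1,1\}^{\mathbb{N}}$, and $\Omega$ is the set of paths. We write $s_n:=x_1+\cdots+x_n$, with $s_0=0$. The capital process of a strategy with zero initial capital is $\mathcal{K}^{\mathcal{P}}_n=\sum_{k=1}^nM_kx_k$. Skeptic weakly forces $E\subseteq\Omega$ if some strategy $\mathcal{P}$ has $\mathcal{K}^{\mathcal{P}}_n(\xi)\ge-1$ for all $\xi\in\Omega$ and $n\ge0$, and $\limsup_n\mathcal{K}^{\mathcal{P}}_n(\xi)=\infty$ for every $\xi\notin E$. *)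

From Stdlib Require Import Reals List.
Open Scope R_scope.

(* Reality's moves: a path is xi : nat -> bool, where xi k is the move of
   round k+1; true encodes x = 1, false encodes x = -1. *)
Definition path := nat -> bool.

Definition mv (b : bool) : R := if b then 1 else -1.

Definition x (xi : path) (n : nat) : R := mv (xi (n - 1)%nat).

Fixpoint s (xi : path) (n : nat) : R :=
  match n with
  | O => 0
  | S m => s xi m + mv (xi m)
  end.

Definition prefix (xi : path) (n : nat) : list bool := map xi (seq 0 n).

(* A strategy: M_n depends only on x_1..x_{n-1}, given as the list of them. *)
Definition strategy := list bool -> R.

Fixpoint capital (P : strategy) (xi : path) (n : nat) : R :=
  match n with
  | O => 0
  | S m => capital P xi m + P (prefix xi m) * mv (xi m)
  end.

(* limsup_n K_n = +infinity, i.e. K is unbounded above *)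
Definition limsup_infty (K : nat -> R) : Prop :=
  forall C : R, forall N : nat, exists n, (N <= n)%nat /\ K n > C.

Definition weakly_forces (E : path -> Prop) : Prop :=
  exists P : strategy,
    (forall xi n, capital P xi n >= -1) /\
    (forall xi, ~ E xi -> limsup_infty (capital P xi)).

Definition infinitely_often (Q : nat -> Prop) : Prop :=
  forall N : nat, exists n, (N <= n)%nat /\ Q n.

Definition E5 (xi : path) : Prop :=
  infinitely_often (fun n => s xi n > sqrt (INR n) - 1).

Definition E6 (xi : path) : Prop :=
  infinitely_often (fun n => s xi n < - sqrt (INR n) + 1).

(* Let Phi(y, n) = ln (5/4 sqrt n - y) - (ln sqrt n) / 2.  For n >= 64 and y <= sqrt n it
   is superharmonic for the simple random walk and stays above -ln 8 one step later, so
   betting lam (Phi(y+1, n+1) - Phi(y-1, n+1)) / 2 keeps the capital above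
   lam (Phi(s_n, n) + ln 8) as long as s_n <= sqrt n.  Skeptic suspends betting whenever
   s_n > sqrt n and resumes with a fresh lam when the walk comes back.  Off E5 the walk
   eventually stays below sqrt n, the last lam is kept forever, and since
   Phi >= (ln n) / 4 - ln 4 the capital tends to infinity.  E6 is the mirror image of E5. *)

From Stdlib Require Import Reals List Lra Lia Psatz Classical.
From Coquelicot Require Import Rcomplements.
Open Scope R_scope.

Lemma weakly_forces_mono (E E' : path -> Prop) :
  (forall xi, E xi -> E' xi) -> weakly_forces E -> weakly_forces E'.
Proof.
  intros HEE' [P [Hbound Hwin]]. exists P. split; [exact Hbound |].
  intros xi HnE'. apply Hwin. intros HE. apply HnE', HEE', HE.
Qed.

Definition mirror (xi : path) : path := fun k => negb (xi k).

Lemma mv_negb (b : bool) : mv (negb b) = - mv b.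
Proof. destruct b; simpl; ring. Qed.

Lemma s_mirror (xi : path) (n : nat) : s (mirror xi) n = - s xi n.
Proof.
  induction n as [|n IH]; simpl; [ring |].
  rewrite IH. unfold mirror. rewrite mv_negb. ring.
Qed.

Lemma prefix_mirror (xi : path) (n : nat) :
  prefix (mirror xi) n = map negb (prefix xi n).
Proof. unfold prefix. rewrite map_map. reflexivity. Qed.

Lemma weakly_forces_mirror (E : path -> Prop) :
  weakly_forces E -> weakly_forces (fun xi => E (mirror xi)).
Proof.
  intros [P [Hbound Hwin]].
  set (Q := fun l : list bool => - P (map negb l)).
  assert (Hcap : forall xi n, capital Q xi n = capital P (mirror xi) n).
  { intros xi n. induction n as [|n IH]; simpl; [reflexivity |].
    rewrite IH, prefix_mirror. unfold Q, mirror. rewrite mv_negb. ring. }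
  exists Q. split.
  - intros xi n. rewrite Hcap. apply Hbound.
  - intros xi HnE C N. destruct (Hwin _ HnE C N) as [n [HNn HC]].
    exists n. rewrite Hcap. auto.
Qed.

Lemma not_infinitely_often (Q : nat -> Prop) :
  ~ infinitely_often Q -> exists N, forall n, (N <= n)%nat -> ~ Q n.
Proof.
  intros HQ. apply not_all_ex_not in HQ as [N HN].
  exists N. intros n HNn Hn. apply HN. exists n. auto.
Qed.

Section PotentialStrategy.

Variable F : R -> nat -> R.
Variable floor : R.
Variable N0 : nat.
Variable bound : nat -> R.

Definition inside (y : R) (n : nat) : Prop := (N0 <= n)%nat /\ y <= bound n.

Hypothesis F_superharmonic : forall y n, inside y n ->
  (F (y + 1) (S n) + F (y - 1) (S n)) / 2 <= F y n.
Hypothesis F_step_ge_floor : forall y n b, inside y n -> floor <= F (y + mv b) (S n).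
Hypothesis F_gt_floor : forall y n, inside y n -> floor < F y n.
Hypothesis F_unbounded : forall C, exists N, forall y n, (N <= n)%nat -> inside y n -> C <= F y n.

Lemma inside_dec (y : R) (n : nat) : {inside y n} + {~ inside y n}.
Proof.
  unfold inside. destruct (Compare_dec.le_dec N0 n), (Rle_dec y (bound n)); [left | right..]; tauto.
Qed.

Record state := mkState { time : nat; pos : R; wealth : R; active : bool; scale : R }.

Definition bet (q : state) : R :=
  if active q
  then scale q * ((F (pos q + 1) (S (time q)) - F (pos q - 1) (S (time q))) / 2)
  else 0.

(* While the path stays inside, Skeptic holds [scale] units of the potential;
   on re-entering he restarts with half of his current wealth at stake. *)
Definition step (q : state) (b : bool) : state :=
  let n' := S (time q) in
  let y' := pos q + mv b in
  let w' := wealth q + bet q * mv b in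
  if inside_dec y' n'
  then mkState n' y' w' true (if active q then scale q else w' / (2 * (F y' n' - floor)))
  else mkState n' y' w' false (scale q).

Definition run (l : list bool) : state := fold_left step l (mkState 0 0 1 false 0).

Definition potential_strategy : strategy := fun l => bet (run l).

Lemma run_prefix_S (xi : path) (n : nat) :
  run (prefix xi (S n)) = step (run (prefix xi n)) (xi n).
Proof.
  unfold run, prefix. rewrite seq_S, map_app, fold_left_app. reflexivity.
Qed.

Lemma step_fields (q : state) (b : bool) :
  time (step q b) = S (time q) /\ pos (step q b) = pos q + mv b /\
  wealth (step q b) = wealth q + bet q * mv b.
Proof. unfold step. destruct inside_dec; simpl; auto. Qed.

Lemma run_prefix (xi : path) (n : nat) :
  time (run (prefix xi n)) = n /\ pos (run (prefix xi n)) = s xi n /\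
  wealth (run (prefix xi n)) = 1 + capital potential_strategy xi n.
Proof.
  induction n as [|n (Ht & Hp & Hw)]; [simpl; repeat split; ring |].
  rewrite run_prefix_S. destruct (step_fields (run (prefix xi n)) (xi n)) as (Ht' & Hp' & Hw').
  rewrite Ht', Hp', Hw', Ht, Hp, Hw. simpl. repeat split; unfold potential_strategy; ring.
Qed.

Lemma active_step (q : state) (b : bool) :
  inside (pos q + mv b) (S (time q)) -> active (step q b) = true.
Proof. intros Hin. unfold step. destruct inside_dec; [reflexivity | contradiction]. Qed.

Lemma scale_step (q : state) (b : bool) : active q = true -> scale (step q b) = scale q.
Proof. intros Ha. unfold step. rewrite Ha. destruct inside_dec; reflexivity. Qed.

Definition solvent (q : state) : Prop :=
  0 < wealth q /\
  (active q = true -> inside (pos q) (time q) /\ 0 < scale q /\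
                      scale q * (F (pos q) (time q) - floor) < wealth q).

Lemma bet_hedges (q : state) (b : bool) :
  active q = true -> 0 <= scale q -> inside (pos q) (time q) ->
  wealth q - scale q * (F (pos q) (time q) - floor) <=
  wealth q + bet q * mv b - scale q * (F (pos q + mv b) (S (time q)) - floor).
Proof.
  intros Ha Hscale Hin. unfold bet. rewrite Ha.
  assert (Hsup := Rmult_le_compat_l _ _ _ Hscale (F_superharmonic _ _ Hin)).
  destruct b; simpl; [| replace (pos q + -1) with (pos q - 1) by ring]; lra.
Qed.

Lemma solvent_step (q : state) (b : bool) : solvent q -> solvent (step q b).
Proof.
  intros [Hw Hq]. unfold step.
  assert (Hw' : 0 < wealth q + bet q * mv b).
  { destruct (active q) eqn:Ha; [| unfold bet; rewrite Ha; lra].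
    destruct (Hq eq_refl) as (Hin & Hscale & Hlt).
    assert (Hfloor := F_step_ge_floor _ _ b Hin).
    assert (Hhedge := bet_hedges q b Ha (Rlt_le _ _ Hscale) Hin).
    nra. }
  destruct inside_dec as [Hin' | Hout]; split; simpl; try easy; intros _.
  destruct (active q) eqn:Ha.
  - destruct (Hq eq_refl) as (Hin & Hscale & Hlt).
    assert (Hhedge := bet_hedges q b Ha (Rlt_le _ _ Hscale) Hin).
    split; [exact Hin' | split; [exact Hscale | lra]].
  - assert (Hpos := F_gt_floor _ _ Hin').
    split; [exact Hin' | split].
    + apply Rdiv_lt_0_compat; lra.
    + field_simplify; lra.
Qed.

Lemma solvent_run (xi : path) (n : nat) : solvent (run (prefix xi n)).
Proof.
  induction n as [|n IH].
  - split; simpl; [lra | discriminate].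
  - rewrite run_prefix_S. apply solvent_step, IH.
Qed.

Lemma active_run (xi : path) (n : nat) :
  inside (s xi (S n)) (S n) -> active (run (prefix xi (S n))) = true.
Proof.
  intros Hin. rewrite run_prefix_S. apply active_step.
  destruct (run_prefix xi n) as (-> & -> & _). exact Hin.
Qed.

Section EventuallyInside.

Variables (xi : path) (m : nat).
Hypothesis inside_after : forall n, (S m <= n)%nat -> inside (s xi n) n.

Lemma scale_run_const (k : nat) :
  scale (run (prefix xi (S m + k))) = scale (run (prefix xi (S m))).
Proof.
  induction k as [|k IH]; [rewrite Nat.add_0_r; reflexivity |].
  rewrite Nat.add_succ_r, run_prefix_S, scale_step; [exact IH |].
  apply (active_run xi (m + k)), inside_after. lia.
Qed.

Lemma wealth_run_ge (k : nat) :
  let L := scale (run (prefix xi (S m))) in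
  0 < L /\ L * (F (s xi (S m + k)) (S m + k) - floor) < 1 + capital potential_strategy xi (S m + k).
Proof.
  intros L.
  assert (Hact : active (run (prefix xi (S m + k))) = true)
    by (apply (active_run xi (m + k)), inside_after; lia).
  destruct (solvent_run xi (S m + k)) as [_ Hsolv].
  destruct (Hsolv Hact) as (_ & Hscale & Hlt).
  destruct (run_prefix xi (S m + k)) as (Ht & Hp & Hw).
  rewrite scale_run_const, Ht, Hp, Hw in *. auto.
Qed.

End EventuallyInside.

Theorem potential_strategy_forces_exit :
  weakly_forces (fun xi => infinitely_often (fun n => bound n < s xi n)).
Proof.
  exists potential_strategy. split.
  - intros xi n. destruct (solvent_run xi n) as [Hw _].
    destruct (run_prefix xi n) as (_ & _ & Hcap). lra.
  - intros xi Hstay C N.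
    destruct (not_infinitely_often _ Hstay) as [M HM].
    assert (Hin : forall n, (S (M + N0) <= n)%nat -> inside (s xi n) n).
    { intros n Hn. split; [lia |]. apply Rnot_lt_le, HM. lia. }
    destruct (wealth_run_ge xi _ Hin 0) as [HL _].
    set (L := scale (run (prefix xi (S (M + N0))))) in HL.
    destruct (F_unbounded (floor + (C + 1) / L)) as [NF HNF].
    exists (S (M + N0) + (N + NF))%nat. split; [lia |].
    destruct (wealth_run_ge xi _ Hin (N + NF)) as [_ Hwealth]. fold L in Hwealth.
    set (n := (S (M + N0) + (N + NF))%nat) in *.
    assert (HF := HNF _ n ltac:(lia) (Hin n ltac:(lia))).
    apply (Rmult_le_compat_l L) in HF; [| lra].
    replace (L * (floor + (C + 1) / L)) with (L * floor + (C + 1)) in HF by (field; lra).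
    lra.
Qed.

End PotentialStrategy.

Definition potential (y : R) (n : nat) : R :=
  ln (5 / 4 * sqrt (INR n) - y) - ln (sqrt (INR n)) / 2.

Lemma le_sqrt_of_square_le (k x : R) : 0 <= k -> k * k <= x -> k <= sqrt x.
Proof. intros Hk H. rewrite <- (sqrt_square k) by exact Hk. apply sqrt_le_1_alt, H. Qed.

Lemma sqrt_INR_unbounded (K : R) : exists N, forall n, (N <= n)%nat -> K <= sqrt (INR n).
Proof.
  destruct (INR_unbounded (K * K)) as [N HN]. exists N. intros n Hn.
  destruct (Rle_lt_dec K 0); [pose proof (sqrt_pos (INR n)); lra |].
  apply le_sqrt_of_square_le; [lra |]. apply le_INR in Hn. lra.
Qed.

Lemma potential_ge (y : R) (n : nat) : (1 <= n)%nat -> y <= sqrt (INR n) ->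
  ln (sqrt (INR n)) / 2 - ln 4 <= potential y n.
Proof.
  intros Hn Hy. unfold potential. apply le_INR in Hn. simpl in Hn.
  set (a := sqrt (INR n)) in *.
  assert (Ha : 1 <= a) by (apply le_sqrt_of_square_le; lra).
  assert (Hln : ln (a / 4) <= ln (5 / 4 * a - y)) by (apply ln_le; lra).
  rewrite ln_div in Hln by lra.
  assert (0 <= ln a) by (rewrite <- ln_1; apply ln_le; lra).
  lra.
Qed.

Lemma potential_step_ge (y : R) (n : nat) : (63 <= n)%nat -> y <= sqrt (INR n) + 1 ->
  - ln 8 <= potential y (S n).
Proof.
  intros Hn Hy. unfold potential. apply le_INR in Hn. rewrite S_INR.
  simpl in Hn. set (a := sqrt (INR n + 1)).
  assert (Ha : 8 <= a) by (apply le_sqrt_of_square_le; lra).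
  assert (Hna : sqrt (INR n) <= a) by (apply sqrt_le_1_alt; lra).
  assert (Hln : ln (a / 8) <= ln (5 / 4 * a - y)) by (apply ln_le; lra).
  rewrite ln_div in Hln by lra.
  assert (0 <= ln a) by (rewrite <- ln_1; apply ln_le; lra).
  lra.
Qed.

Lemma potential_superharmonic (y : R) (n : nat) : (64 <= n)%nat -> y <= sqrt (INR n) ->
  (potential (y + 1) (S n) + potential (y - 1) (S n)) / 2 <= potential y n.
Proof.
  intros Hn Hy. unfold potential. apply le_INR in Hn. rewrite S_INR. simpl in Hn.
  assert (Hsq : sqrt (INR n + 1) * sqrt (INR n + 1) = sqrt (INR n) * sqrt (INR n) + 1)
    by (rewrite !sqrt_sqrt; lra).
  assert (Hba : sqrt (INR n) <= sqrt (INR n + 1)) by (apply sqrt_le_1_alt; lra).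
  set (a := sqrt (INR n + 1)) in *. set (b := sqrt (INR n)) in *.
  assert (Hb : 8 <= b) by (apply le_sqrt_of_square_le; lra).
  assert (Ha : 9 * a <= 16 * b) by nra.
  (* Since [a^2 = b^2 + 1], the difference of the two sides is [(a - b) (y^2 + b (b - 9a/16))]. *)
  assert (Hpoly : b * ((5 / 4 * a - (y + 1)) * (5 / 4 * a - (y - 1)))
                  <= a * ((5 / 4 * b - y) * (5 / 4 * b - y))).
  { assert (0 <= (a - b) * (y * y + b * (b - 9 / 16 * a))).
    { apply Rmult_le_pos; [lra |].
      assert (0 <= b * (b - 9 / 16 * a)) by (apply Rmult_le_pos; lra). nra. }
    nra. }
  apply ln_le in Hpoly; [| apply Rmult_lt_0_compat; [lra | apply Rmult_lt_0_compat; lra]].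
  rewrite !ln_mult in Hpoly by (try apply Rmult_lt_0_compat; lra).
  lra.
Qed.

Lemma weakly_forces_exceed_sqrt :
  weakly_forces (fun xi => infinitely_often (fun n => sqrt (INR n) < s xi n)).
Proof.
  assert (Hln48 : ln 4 < ln 8) by (apply ln_increasing; lra).
  apply (potential_strategy_forces_exit potential (- ln 8) 64 (fun n => sqrt (INR n))).
  - intros y n [Hn Hy]. apply potential_superharmonic; assumption.
  - intros y n b [Hn Hy]. apply potential_step_ge; [lia | destruct b; simpl; lra].
  - intros y n [Hn Hy].
    assert (Hsqrt : 1 <= sqrt (INR n))
      by (apply le_sqrt_of_square_le; [lra | rewrite Rmult_1_r; apply (le_INR 1); lia]).
    assert (0 <= ln (sqrt (INR n))) by (rewrite <- ln_1; apply ln_le; lra).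
    pose proof (potential_ge y n ltac:(lia) Hy). lra.
  - intros C. destruct (sqrt_INR_unbounded (exp (2 * (C + ln 4)))) as [N HN].
    exists N. intros y n HNn [Hn Hy].
    assert (Hln : 2 * (C + ln 4) <= ln (sqrt (INR n))).
    { rewrite <- (ln_exp (2 * (C + ln 4))). apply ln_le; [apply exp_pos | apply HN, HNn]. }
    pose proof (potential_ge y n ltac:(lia) Hy). lra.
Qed.

Theorem theorem4 : weakly_forces E5 /\ weakly_forces E6.
Proof.
  assert (HE5 : weakly_forces E5).
  { refine (weakly_forces_mono _ _ _ weakly_forces_exceed_sqrt).
    intros xi Hio N. destruct (Hio N) as [n [HNn Hn]]. exists n. split; [exact HNn | lra]. }
  split; [exact HE5 |].
  refine (weakly_forces_mono _ _ _ (weakly_forces_mirror _ HE5)).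
  intros xi Hio N. destruct (Hio N) as [n [HNn Hn]]. exists n.
  rewrite s_mirror in Hn. split; [exact HNn | lra].
Qed.
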